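(* Every partition tautology is a subset tautology. Moreover the inclusion is strict: for any set $U$ and any partition $\sigma$ on $U$ with $\sigma\neq\mathbf{0}$ and $\sigma\neq\mathbf{1}$ (such $\sigma$ exist when $|U|\ge 3$), one has $\sigma\vee(\sigma\Rightarrow\mathbf{0})=\sigma\neq\mathbf{1}$; hence the formula $x\vee(x\Rightarrow\mathbf{0})$ is a subset tautology but not a partition tautology.
   Context: Formulas are built from variables and the constants $\mathbf{0},\mathbf{1}$ using the binary connectives $\vee,\wedge,\Rightarrow$. A formula is a subset tautology if, for every nonempty set $U$ and every assignment of subsets of $U$ to the variables, it evaluates to $U$ when $\vee,\wedge$ are interpreted as $\cup,\cap$, $S\Rightarrow T$ as $(U\setminus S)\cup T$, $\mathbf{0}$ as $\emptyset$ and $\mathbf{1}$ as $U$. A partition on a set $U$ is a set of non-empty, pairwise disjoint subsets of $U$ (called blocks) whose union is $U$. The discrete partition is $\mathbf{1}=\{\{u\}:u\in U\}$ and the indiscrete partition is $\mathbf{0}=\{U\}$. The join $\pi\vee\sigma$ is the partition whose blocks are the non-empty intersections $B\cap C$, $B\in\pi$, $C\in\sigma$. The meet $\pi\wedge\sigma$ is the partition whose blocks are the equivalence classes of the equivalence relation on $U$ generated by: $u\sim u'$ if $u,u'$ lie in a common block of $\pi$ or in a common block of $\sigma$. The partition implication $\sigma\Rightarrow\pi$ is the partition obtained from $\pi$ by replacing every block $B\in\pi$ that is contained in some block of $\sigma$ by the singletons $\{u\}$, $u\in B$, and leaving every block of $\pi$ not contained in any block of $\sigma$ unchanged. A formula is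 a partition tautology if, for every set $U$ with $|U|\ge 2$ and every assignment of partitions on $U$ to the variables, it evaluates to $\mathbf{1}$ when $\vee,\wedge,\Rightarrow,\mathbf{0},\mathbf{1}$ are interpreted as the partition join, meet, implication, indiscrete and discrete partitions. *)

From mathcomp Require Import all_boot.
From mathcomp Require Import boolp classical_sets.
From Stdlib Require Import Relations.Relation_Operators.
Set Implicit Arguments. Unset Strict Implicit. Unset Printing Implicit Defensive.
Local Open Scope classical_set_scope.

Inductive formula : Type :=
| FVar : nat -> formula
| FZero : formula
| FOne : formula
| FOr : formula -> formula -> formula
| FAnd : formula -> formula -> formula
| FImp : formula -> formula -> formula.

Fixpoint sub_eval {U : Type} (v : nat -> set U) (f : formula) : set U :=
  match f with
  | FVar n => v n
  | FZero => set0
  | FOne => setT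
  | FOr a b => sub_eval v a `|` sub_eval v b
  | FAnd a b => sub_eval v a `&` sub_eval v b
  | FImp a b => (~` sub_eval v a) `|` sub_eval v b
  end.

Definition subset_tautology (f : formula) : Prop :=
  forall (U : Type), (exists u : U, True) ->
  forall v : nat -> set U, sub_eval v f = setT.

Definition is_partition (U : Type) (P : set (set U)) : Prop :=
  [/\ (forall B, P B -> B !=set0),
      (forall B C, P B -> P C -> B <> C -> B `&` C = set0)
    & (forall u : U, exists B, P B /\ B u)].

(* discrete partition 1 and indiscrete partition 0 *)
Definition pdiscrete {U : Type} : set (set U) := [set X | exists u : U, X = [set u]].
Definition pindiscrete {U : Type} : set (set U) := [set setT].

Definition pjoin (U : Type) (P Q : set (set U)) : set (set U) :=
  [set X | exists B C, [/\ P B, Q C, X = B `&` C & X !=set0]].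

Definition pmeet_rel (U : Type) (P Q : set (set U)) : U -> U -> Prop :=
  fun u u' => exists B, (P B \/ Q B) /\ B u /\ B u'.
Definition pmeet (U : Type) (P Q : set (set U)) : set (set U) :=
  [set X | exists u : U,
     X = [set u' | clos_refl_sym_trans U (pmeet_rel P Q) u u']].

(* implication S => P: blocks of P contained in some block of S are
   replaced by singletons, the others are kept *)
Definition pimp (U : Type) (S P : set (set U)) : set (set U) :=
  [set X | (P X /\ ~ (exists C, S C /\ X `<=` C))
        \/ (exists B u, [/\ P B, (exists C, S C /\ B `<=` C), B u & X = [set u]])].

Fixpoint part_eval {U : Type} (v : nat -> set (set U)) (f : formula) : set (set U) :=
  match f with
  | FVar n => v n
  | FZero => @pindiscrete U
  | FOne => @pdiscrete U
  | FOr a b => pjoin (part_eval v a) (part_eval v b)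
  | FAnd a b => pmeet (part_eval v a) (part_eval v b)
  | FImp a b => pimp (part_eval v a) (part_eval v b)
  end.

Definition partition_tautology (f : formula) : Prop :=
  forall (U : Type), (exists u u' : U, u <> u') ->
  forall v : nat -> set (set U), (forall n, is_partition (v n)) ->
  part_eval v f = @pdiscrete U.

Definition excluded_middle_formula : formula :=
  FOr (FVar 0) (FImp (FVar 0) FZero).

From mathcomp Require Import all_boot.
From mathcomp Require Import boolp classical_sets.
From Stdlib Require Import Relations.Relation_Operators.
Local Open Scope classical_set_scope.

(* Both semantics are compared through two-valued (Boolean) evaluation.
   - Subset side: the value of a formula at a point u of U is the Boolean
     value of the formula under the assignment "n |-> (u is in v n)"; hence
     a formula true under every Boolean assignment is a subset tautology.
   - Partition side: on any set with two distinct points, the indiscrete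
     partition 0 and the discrete partition 1 are closed under join, meet
     and implication, which act on them as or, and, Boolean implication.
     So a partition tautology evaluated on {0, 1}-valued assignments shows
     that it is true under every Boolean assignment.
   For strictness, a partition sigma <> 0 never has U inside one of its
   blocks, so sigma => 0 = 0 and sigma \/ (sigma => 0) = sigma \/ 0 = sigma.
   A partition with two blocks, one of which has two points, witnesses that
   x \/ (x => 0) is not a partition tautology, though it is Boolean-true. *)

Fixpoint beval (b : nat -> bool) (f : formula) : bool :=
  match f with
  | FVar n => b n
  | FZero => false
  | FOne => true
  | FOr x y => beval b x || beval b y
  | FAnd x y => beval b x && beval b y
  | FImp x y => ~~ beval b x || beval b y
  end.

Lemma sub_eval_beval (U : Type) (v : nat -> set U) (u : U) (f : formula) :
  sub_eval v f u <-> beval (fun n => `[< v n u >]) f.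
Proof.
elim: f => [n|||x IHx y IHy|x IHx y IHy|x IHx y IHy] /=.
- by split => /asboolP.
- by [].
- by [].
- split => [[/IHx->|/IHy->]|/orP[/IHx|/IHy]]; rewrite ?orbT //; by [left|right].
- by split => [[/IHx-> /IHy->]|/andP[/IHx ? /IHy ?]].
- split => [[nx|/IHy->]|/orP[/negP nx|/IHy]]; rewrite ?orbT //.
  + by apply/orP; left; apply/negP => /IHx.
  + by left => /IHx.
  + by right.
Qed.

Lemma boolean_tautology_subset (f : formula) :
  (forall b, beval b f) -> subset_tautology f.
Proof.
move=> taut U _ v; apply/predeqP => u; split=> // _.
exact/sub_eval_beval.
Qed.

Lemma clos_rst_eq {T : Type} {R : T -> T -> Prop} :
  (forall x y, R x y -> x = y) ->
  forall x y, clos_refl_sym_trans T R x y -> x = y.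
Proof.
by move=> Req x y; elim=> [? ? /Req||? ? _ ->|? ? ? _ -> _ ->].
Qed.

Section ConstantPartitions.

Variable U : Type.
Hypothesis two_points : exists u u' : U, u <> u'.

Definition pconst (c : bool) : set (set U) :=
  if c then pdiscrete else pindiscrete.

Lemma setT_neq_set1 (u : U) : setT <> [set u].
Proof.
case: two_points => x [y xy] Tu.
have /= xu : [set u] x by rewrite -Tu.
have /= yu : [set u] y by rewrite -Tu.
by apply: xy; rewrite xu yu.
Qed.

Lemma pindiscrete_neq_pdiscrete : @pindiscrete U <> @pdiscrete U.
Proof.
move=> E; have [u] : @pdiscrete U setT by rewrite -E.
exact: setT_neq_set1.
Qed.

Lemma pconst_partition (c : bool) : is_partition (pconst c).
Proof.
case: c; split => /=.
- by move=> B [u ->]; exists u.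
- move=> B C [u ->] [w ->] uw; apply/predeqP => y; split => //= [[-> wy]].
  by apply: uw; rewrite wy.
- by move=> u; exists [set u]; split => //; exists u.
- by move=> B ->; case: two_points => u _; exists u.
- by move=> B C -> ->.
- by move=> u; exists setT.
Qed.

Lemma pjoin_pconst (a b : bool) : pjoin (pconst a) (pconst b) = pconst (a || b).
Proof.
apply/predeqP => X; case: a; case: b; rewrite /pjoin /pdiscrete /pindiscrete /=;
  split.
- case=> _ [_ [[u ->] [w ->] -> [x [/= xu xw]]]]; exists u.
  by rewrite -xu xw setIid.
- case=> u ->; exists [set u], [set u]; rewrite setIid.
  by split => //; exists u.
- by case=> _ [_ [[w ->] -> -> _]]; exists w; rewrite setIT.
- case=> u ->; exists [set u], setT; rewrite setIT.
  by split => //; exists u.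
- by case=> _ [_ [-> [w ->] -> _]]; exists w; rewrite setTI.
- case=> u ->; exists setT, [set u]; rewrite setTI.
  by split => //; exists u.
- by case=> _ [_ [-> -> -> _]]; rewrite setIT.
- move=> ->; exists setT, setT; rewrite setIT.
  by split => //; case: two_points => u _; exists u.
Qed.

Lemma pmeet_pdiscrete : pmeet (@pdiscrete U) pdiscrete = pdiscrete.
Proof.
have rel_eq : forall x y, pmeet_rel (@pdiscrete U) pdiscrete x y -> x = y.
  by move=> x y [_ [[[w ->]|[w ->]] [/= -> ->]]].
have class_eq u : [set u' | clos_refl_sym_trans U (pmeet_rel pdiscrete pdiscrete) u u']
    = [set u].
  apply/predeqP => y /=; split => [/(clos_rst_eq rel_eq) -> //|->].
  exact: rst_refl.
by apply/predeqP => X; split; case=> u ->; exists u; rewrite class_eq.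
Qed.

(* If one of the two partitions has the whole set as a block, then all
   points are related and the meet is indiscrete. *)
Lemma pmeet_full_block (P Q : set (set U)) :
  P setT \/ Q setT -> pmeet P Q = pindiscrete.
Proof.
move=> PQT; case: two_points => u0 _.
have all_related u : [set u' | clos_refl_sym_trans U (pmeet_rel P Q) u u'] = setT.
  apply/predeqP => y; split => // _; apply: rst_step.
  by exists setT.
by apply/predeqP => X /=; split => [[u ->]|->]; [|exists u0]; rewrite all_related.
Qed.

Lemma pmeet_pconst (a b : bool) : pmeet (pconst a) (pconst b) = pconst (a && b).
Proof.
case: a; case: b; first exact: pmeet_pdiscrete.
all: apply: pmeet_full_block; by [left|right].
Qed.

(* 1 => 0 = 0 because the only block of 0, the whole set, lies in no
   singleton; in all other cases the result is 1. *)
Lemma pimp_pconst (a b : bool) :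
  pimp (pconst a) (pconst b) = pconst (~~ a || b).
Proof.
have setT_not_in1 : ~ exists C, @pdiscrete U C /\ setT `<=` C.
  case=> C [[w ->] Tw]; apply: (setT_neq_set1 w).
  by apply/predeqP => y; split => // _; apply: Tw.
case: a; case: b; rewrite /pimp /pdiscrete /pindiscrete; apply/predeqP => X /=;
  split.
- by case=> [[[u ->] _]|[_ [u [_ _ _ ->]]]]; exists u.
- case=> u ->; right; exists [set u], u; split => //; first by exists u.
  by exists [set u]; split => //; exists u.
- by case=> [[-> _]|[_ [u [-> /setT_not_in1 [] _ _]]]].
- by move=> ->; left.
- by case=> [[[u ->] _]|[_ [u [_ _ _ ->]]]]; exists u.
- case=> u ->; right; exists [set u], u; split => //; first by exists u.
  by exists setT.
- by case=> [[-> []]|[_ [u [_ _ _ ->]]]]; [exists setT|exists u].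
- case=> u ->; right; exists setT, u; split => //.
  by exists setT.
Qed.

Lemma part_eval_pconst (b : nat -> bool) (f : formula) :
  part_eval (fun n => pconst (b n)) f = pconst (beval b f).
Proof.
elim: f => [n|||x IHx y IHy|x IHx y IHy|x IHx y IHy] //=;
  by rewrite IHx IHy ?pjoin_pconst ?pmeet_pconst ?pimp_pconst.
Qed.

End ConstantPartitions.

(* A partition tautology is a Boolean tautology (tested on U = bool). *)
Lemma partition_tautology_boolean (f : formula) :
  partition_tautology f -> forall b, beval b f.
Proof.
have two_points : exists u u' : bool, u <> u' by exists true, false.
move=> taut b.
have := taut bool two_points _ (fun n => @pconst_partition bool two_points (b n)).
rewrite part_eval_pconst; case: (beval b f) => // E.
by case: (@pindiscrete_neq_pdiscrete bool two_points E).
Qed.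

Lemma partition_setT (U : Type) (sigma : set (set U)) :
  is_partition sigma -> sigma setT -> sigma = pindiscrete.
Proof.
case=> nonempty disjoint _ sT; apply/predeqP => X; split => [sX|-> //].
apply: contrapT => XT; have [x Xx] := nonempty _ sX.
have := disjoint _ _ sX sT XT; rewrite setIT => X0.
by rewrite X0 in Xx.
Qed.

(* If sigma <> 0, no block of 0 lies in a block of sigma, so sigma => 0 = 0. *)
Lemma pimp_indiscrete (U : Type) (sigma : set (set U)) :
  is_partition sigma -> sigma <> pindiscrete -> pimp sigma pindiscrete = pindiscrete.
Proof.
move=> part s0.
have no_full_block : ~ exists C, sigma C /\ setT `<=` C.
  case=> C [sC TC]; apply/s0/partition_setT => //.
  by have -> : setT = C by apply/predeqP => y; split => // _; apply: TC.
apply/predeqP => X; split => [[[-> _]|[_ [u [/= -> /no_full_block [] _ _]]]] //|/= ->].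
by left.
Qed.

Lemma pjoin_indiscrete (U : Type) (sigma : set (set U)) :
  is_partition sigma -> pjoin sigma pindiscrete = sigma.
Proof.
case=> nonempty _ _; apply/predeqP => X; split.
- by case=> B [_ [sB /= -> -> _]]; rewrite setIT.
- move=> sX; exists X, setT; rewrite setIT.
  by split => //; apply: nonempty.
Qed.

Lemma pjoin_pimp_indiscrete (U : Type) (sigma : set (set U)) :
  is_partition sigma -> sigma <> pindiscrete ->
  pjoin sigma (pimp sigma pindiscrete) = sigma.
Proof.
by move=> part s0; rewrite pimp_indiscrete // pjoin_indiscrete.
Qed.

Definition two_block {U : Type} (A : set U) : set (set U) :=
  [set X | X = A \/ X = ~` A].

Lemma two_block_partition (U : Type) (A : set U) :
  A !=set0 -> ~` A !=set0 -> is_partition (two_block A).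
Proof.
move=> A0 CA0; split.
- by move=> B [->|->].
- move=> B C [->|->] [->|->] // _; first by rewrite setICr.
  by rewrite setIC setICr.
- move=> u; case: (pselect (A u)) => Au.
  + by exists A; split => //; left.
  + by exists (~` A); split => //; right.
Qed.

Lemma two_block_neq_indiscrete (U : Type) (A : set U) :
  ~` A !=set0 -> two_block A <> pindiscrete.
Proof.
move=> [x nAx] E; have /= AT : pindiscrete A by rewrite -E; left.
by apply: nAx; rewrite AT.
Qed.

(* Two points outside A lie in the same block, so the partition is not 1. *)
Lemma two_block_neq_discrete (U : Type) (A : set U) (x y : U) :
  x <> y -> ~ A x -> ~ A y -> two_block A <> pdiscrete.
Proof.
move=> xy nAx nAy E; have [w Aw] : pdiscrete (~` A) by rewrite -E; right.
have /= xw : [set w] x by rewrite -Aw.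
have /= yw : [set w] y by rewrite -Aw.
by apply: xy; rewrite xw yw.
Qed.

Lemma three_points_partition {U : Type} {u1 u2 u3 : U} :
  [/\ u1 <> u2, u1 <> u3 & u2 <> u3] ->
  [/\ is_partition (two_block [set u1]), two_block [set u1] <> pindiscrete
    & two_block [set u1] <> pdiscrete].
Proof.
case=> n12 n13 n23; have n21 : ~ [set u1] u2 by move/esym.
split.
- by apply: two_block_partition; [exists u1|exists u2].
- by apply: two_block_neq_indiscrete; exists u2.
- by apply: (@two_block_neq_discrete _ _ u2 u3) => // /esym.
Qed.

Theorem mainTheorem8 :
  (forall f : formula, partition_tautology f -> subset_tautology f) /\
  (forall (U : Type) (sigma : set (set U)),
      is_partition sigma -> sigma <> @pindiscrete U -> sigma <> @pdiscrete U ->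
      pjoin sigma (pimp sigma (@pindiscrete U)) = sigma /\ sigma <> @pdiscrete U) /\
  (forall U : Type, (exists u1 u2 u3 : U, [/\ u1 <> u2, u1 <> u3 & u2 <> u3]) ->
      exists sigma : set (set U),
        [/\ is_partition sigma, sigma <> @pindiscrete U & sigma <> @pdiscrete U]) /\
  subset_tautology excluded_middle_formula /\
  ~ partition_tautology excluded_middle_formula.
Proof.
split; [|split; [|split; [|split]]].
- move=> f /partition_tautology_boolean; exact: boolean_tautology_subset.
- by move=> U sigma part s0 s1; rewrite pjoin_pimp_indiscrete.
- move=> U [u1 [u2 [u3 distinct]]]; exists (two_block [set u1]).
  exact: three_points_partition distinct.
- by apply: boolean_tautology_subset => b /=; case: (b 0).
- move=> taut; have distinct : [/\ 0 <> 1, 0 <> 2 & 1 <> 2] by [].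
  have [part s0 s1] := three_points_partition distinct.
  apply: s1; rewrite -(taut nat _ (fun _ => two_block [set 0]) (fun _ => part)).
    by rewrite /excluded_middle_formula /= pjoin_pimp_indiscrete.
  by exists 0, 1.
Qed.
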